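(* Let $\mathcal{M}$ be a saturated model of Presburger arithmetic, $\mathcal{M}_0\preceq\mathcal{M}$ a small elementary submodel, $C\subseteq\mathcal{M}^n$ an open cell definable over $\mathcal{M}_0$, and $a\in C$ with $\dim(a/\mathcal{M}_0)=n$. Then there is an $n$-box $B$ around $a$ with $B\subseteq C$.
   Context: Presburger arithmetic is $\mathrm{Th}(\mathbb{Z},+,-,<,0,1,\{\equiv_n\}_n)$. Cells are defined inductively: a $0$-cell is a point of $\mathrm{dcl}(B)$; a $1$-cell is an infinite set $\{x:\alpha\ \square_1\ x\ \square_2\ \beta,\ x\equiv_N c\}$ with $\alpha,\beta\in\mathrm{dcl}(B)$, $0\le c<N$ integers, $\square_j$ either $\le$ or no condition; given an $(i_1,\dots,i_n)$-cell $C'$, an $(i_1,\dots,i_n,0)$-cell is the graph of a $B$-linear function on $C'$ and an $(i_1,\dots,i_n,1)$-cell is $\{(x,t):x\in C',\ \alpha(x)\ \square_1\ t\ \square_2\ \beta(x),\ t\equiv_N k\}$ with $\alpha,\beta$ $B$-linear on $C'$ and fiber sizes not uniformly bounded. Here a $B$-linear function is $f(x)=\sum_i s_i\frac{x_i-c_i}{k_i}+\gamma$ with integers $s_i,k_i$, $0\le c_i<k_i$, $x_i\equiv_{k_i}c_i$, $\gamma\in\mathrm{dcl}(B)$. The dimension of an $(i_1,\dots,i_n)$-cell is $\sum_j i_j$; a cell in $\mathcal{M}^n$ is open if its dimension is $n$. The dimension of a tuple over $\mathcal{M}_0$ is the size of a maximal dcl-independent (over $\mathcal{M}_0$) subset of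 its coordinates. A box around $p\in\mathcal{M}^n$ is a product $B_1\times\dots\times B_n$ of sets $B_i=\{x:\alpha_i\ \square_1\ x\ \square_2\ \beta_i,\ x\equiv_{N_i}c_i\}$ with $p_i\in B_i$ and $[\alpha_i,p_i]$, $[p_i,\beta_i]$ infinite. *)

From mathcomp Require Import all_boot all_order all_algebra.
Set Implicit Arguments. Unset Strict Implicit. Unset Printing Implicit Defensive.

Inductive term : Type :=
| TVar of nat | TZero | TOne | TAdd of term & term | TSub of term & term.

Inductive form : Type :=
| FLt of term & term
| FEq of term & term
| FCong of nat & term & term
| FNot of form
| FAnd of form & form
| FOr of form & form
| FEx of nat & form.

Record PStruct := {
  car :> Type;
  p_add : car -> car -> car;
  p_sub : car -> car -> car;
  p_zero : car;
  p_one : car;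
  p_lt : car -> car -> Prop;
  p_cong : nat -> car -> car -> Prop }.

Section Semantics.
Variable M : PStruct.

Definition upd (e : nat -> M) (i : nat) (x : M) : nat -> M :=
  fun j => if j == i then x else e j.

Fixpoint teval (e : nat -> M) (t : term) : M :=
  match t with
  | TVar i => e i
  | TZero => @p_zero M
  | TOne => @p_one M
  | TAdd t1 t2 => @p_add M (teval e t1) (teval e t2)
  | TSub t1 t2 => @p_sub M (teval e t1) (teval e t2)
  end.

Fixpoint satIn (D : M -> Prop) (e : nat -> M) (f : form) : Prop :=
  match f with
  | FLt t1 t2 => @p_lt M (teval e t1) (teval e t2)
  | FEq t1 t2 => teval e t1 = teval e t2
  | FCong n t1 t2 => @p_cong M n (teval e t1) (teval e t2)
  | FNot g => ~ satIn D e g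
  | FAnd g h => satIn D e g /\ satIn D e h
  | FOr g h => satIn D e g \/ satIn D e h
  | FEx i g => exists x, D x /\ satIn D (upd e i x) g
  end.

Definition sat (e : nat -> M) (f : form) : Prop := satIn (fun _ => True) e f.

(* ---------- cardinality: "small" = strictly smaller cardinality than M ---------- *)
Definition small (A : M -> Prop) : Prop :=
  ~ exists g : M -> {x : M | A x}, injective g.

Definition substructure (P : M -> Prop) : Prop :=
  [/\ P (@p_zero M), P (@p_one M),
      (forall x y, P x -> P y -> P (@p_add M x y)) &
      (forall x y, P x -> P y -> P (@p_sub M x y))].

(* P is (the universe of) an elementary substructure: truth in the induced
   substructure (= truth with quantifiers relativized to P) agrees with truth in M
   for all formulas and all assignments into P *)
Definition elem_sub (P : M -> Prop) : Prop :=
  substructure P /\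
  forall (f : form) (e : nat -> M), (forall i, P (e i)) -> (satIn P e f <-> sat e f).

(* a partial 1-type over A: a set of formulas phi(v_0; params) where the parameters
   are given by an assignment e with values in A on the variables other than v_0 *)
Definition finsat (Sig : form -> (nat -> M) -> Prop) : Prop :=
  forall (m : nat) (phis : 'I_m -> form) (es : 'I_m -> nat -> M),
    (forall j, Sig (phis j) (es j)) ->
    exists x, forall j, sat (upd (es j) 0 x) (phis j).

Definition Saturated : Prop :=
  forall (A : M -> Prop), small A ->
  forall Sig : form -> (nat -> M) -> Prop,
    (forall f e, Sig f e -> forall i, i <> 0%N -> A (e i)) ->
    finsat Sig ->
    exists x, forall f e, Sig f e -> sat (upd e 0 x) f.

Definition dcl (A : M -> Prop) (x : M) : Prop :=
  exists (f : form) (e : nat -> M),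
    (forall i, i <> 0%N -> A (e i)) /\
    forall y, sat (upd e 0 y) f <-> y = x.

Definition dcl_indep (P : M -> Prop) (n : nat) (a : 'I_n -> M) (S : {set 'I_n}) :=
  forall i, i \in S ->
    ~ dcl (fun x => P x \/ exists j, [/\ j \in S, j != i & x = a j]) (a i).

(* dim(a/P) = d : d is the size of a maximal dcl-independent subset of coordinates *)
Definition dim_eq (P : M -> Prop) (n : nat) (a : 'I_n -> M) (d : nat) : Prop :=
  exists S : {set 'I_n},
    [/\ dcl_indep P a S,
        (forall S' : {set 'I_n}, S \subset S' -> dcl_indep P a S' -> S' = S) &
        #|S| = d].

Definition p_le (x y : M) : Prop := @p_lt M x y \/ x = y.

Definition nmul (k : nat) (x : M) : M := iter k (@p_add M x) (@p_zero M).

Definition zmul (z : int) (x : M) : M :=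
  match z with
  | Posz k => nmul k x
  | Negz k => @p_sub M (@p_zero M) (nmul k.+1 x)
  end.

Definition cst (c : nat) : M := nmul c (@p_one M).

Definition atmost (m : nat) (S : M -> Prop) : Prop :=
  forall g : 'I_m.+1 -> M, injective g -> ~ (forall i, S (g i)).

Definition infinite_set (S : M -> Prop) : Prop := forall m, ~ atmost m S.

(* f(x) = sum_i s_i (x_i - c_i)/k_i + gamma *)
Record linfun (n : nat) := LinFun {
  lf_s : 'I_n -> int;
  lf_k : 'I_n -> nat;
  lf_c : 'I_n -> nat;
  lf_g : M }.

Definition linval n (f : linfun n) (x : 'I_n -> M) (v : M) : Prop :=
  exists y : 'I_n -> M,
    (forall i, nmul (lf_k f i) (y i) = @p_sub M (x i) (cst (lf_c f i))) /\
    v = @p_add M (\big[@p_add M / @p_zero M]_(i < n) zmul (lf_s f i) (y i)) (lf_g f).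

Definition is_Blin (B : M -> Prop) n (C : ('I_n -> M) -> Prop) (f : linfun n) : Prop :=
  [/\ forall i, (0 < lf_k f i)%N,
      forall i, (lf_c f i < lf_k f i)%N,
      dcl B (lf_g f) &
      forall x, C x -> forall i, @p_cong M (lf_k f i) (x i) (cst (lf_c f i))].

Definition tinit n (z : 'I_n.+1 -> M) : 'I_n -> M := fun i => z (widen_ord (leqnSn n) i).
Definition tlast n (z : 'I_n.+1 -> M) : M := z ord_max.

(* fiber of an (...,1)-cell above x; lo/hi = whether the bound is present *)
Definition strip n (al be : linfun n) (lo hi : bool) (N k : nat) (x : 'I_n -> M) (t : M) :=
  [/\ lo -> exists v, linval al x v /\ p_le v t,
      hi -> exists v, linval be x v /\ p_le t v &
      @p_cong M N t (cst k)].

(* cells over B in M^n, indexed by their type (i_1,...,i_n) as a seq bool.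
   The base case is the (unique, trivial) cell M^0; this yields exactly the 0-cells
   and 1-cells of the paper in M^1. *)
Inductive cell (B : M -> Prop) : forall n : nat, seq bool -> (('I_n -> M) -> Prop) -> Prop :=
| cell_nil : cell B [::] (fun _ : 'I_0 -> M => True)
| cell_graph n s (C : ('I_n -> M) -> Prop) (f : linfun n) :
    cell B s C -> is_Blin B C f ->
    cell B (rcons s false) (fun z : 'I_n.+1 -> M => C (tinit z) /\ linval f (tinit z) (tlast z))
| cell_strip n s (C : ('I_n -> M) -> Prop) (al be : linfun n) (lo hi : bool) (N k : nat) :
    cell B s C -> is_Blin B C al -> is_Blin B C be ->
    (0 < N)%N -> (k < N)%N ->
    ~ (exists m, forall x, C x -> atmost m (strip al be lo hi N k x)) ->
    cell B (rcons s true) (fun z : 'I_n.+1 -> M => C (tinit z) /\ strip al be lo hi N k (tinit z) (tlast z)).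

Definition open_cell (B : M -> Prop) (n : nat) (C : ('I_n -> M) -> Prop) : Prop :=
  cell B (nseq n true) C.

Definition box_around (n : nat) (p : 'I_n -> M) (Bx : ('I_n -> M) -> Prop) : Prop :=
  exists (al be : 'I_n -> M) (lo hi : 'I_n -> bool) (N c : 'I_n -> nat),
    let Bi i x := [/\ lo i -> p_le (al i) x, hi i -> p_le x (be i) &
                      @p_cong M (N i) x (cst (c i))] in
    [/\ forall i, (0 < N i)%N /\ (c i < N i)%N,
        forall i, Bi i (p i),
        forall i, lo i -> infinite_set (fun x => p_le (al i) x /\ p_le x (p i)),
        forall i, hi i -> infinite_set (fun x => p_le (p i) x /\ p_le x (be i)) &
        forall x, Bx x <-> forall i, Bi i (x i)].

End Semantics.

Definition Zstr : PStruct :=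
  {| car := int;
     p_add := fun x y => (x + y)%R;
     p_sub := fun x y => (x - y)%R;
     p_zero := 0%R;
     p_one := 1%R;
     p_lt := fun x y => (x < y)%R;
     p_cong := fun n x y => (n%:Z %| (x - y)%R)%Z |}.

(* M |= Th(Z): every formula valid in Z is valid in M (universal closures) *)
Definition IsPresModel (M : PStruct) : Prop :=
  forall f : form, (forall e : nat -> Zstr, sat e f) -> forall e : nat -> M, sat e f.

(* Every arithmetic fact used below is a universal statement true in Z, hence true in
   the model M.  If a is generic over M0, each coordinate a_k lies at a nonstandard
   distance from everything definable over M0 and the other coordinates, in particular
   from the values at (a_1, ..., a_(k-1)) of the linear bounds of the cell.  A linear
   function whose coefficients have absolute values summing to S moves by at most S d
   when its arguments move by at most d, so a nonstandard radius d below each such gap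
   divided by S + 1, chosen inductively along the cell, keeps the box of radius d (with
   the congruences of the cell) inside the cell; its sides are infinite because d is
   nonstandard. *)

From Pilot Require Import Defs.
From mathcomp Require Import all_boot all_order all_algebra.
From mathcomp Require Import zify.
From Stdlib Require Import Classical FunctionalExtensionality.
Set Implicit Arguments. Unset Strict Implicit. Unset Printing Implicit Defensive.
Import Order.TTheory GRing.Theory Num.Theory.

Definition tnmul (k : nat) (t : term) : term := iter k (TAdd t) TZero.
Definition tcst (c : nat) : term := tnmul c TOne.
Definition tzmul (z : int) (t : term) : term :=
  match z with Posz k => tnmul k t | Negz k => TSub TZero (tnmul k.+1 t) end.

Notation V := TVar.
Notation fle t1 t2 := (FOr (FLt t1 t2) (FEq t1 t2)).
Notation fimp p q := (FOr (FNot p) q).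
Notation fnear a d x := (FAnd (fle (TSub a d) x) (fle x (TAdd a d))).

Section Eval.
Variable M : PStruct.

Lemma teval_nmul e k t : teval e (tnmul k t) = nmul k (teval (M:=M) e t).
Proof. by elim: k => //= k ->. Qed.

Lemma teval_cst e c : teval e (tcst c) = cst M c.
Proof. exact: teval_nmul. Qed.

Lemma teval_zmul e z t : teval e (tzmul z t) = zmul z (teval (M:=M) e t).
Proof. by case: z => k /=; rewrite teval_nmul. Qed.

Lemma sat_fimp (e : nat -> M) p q : sat e (fimp p q) <-> (sat e p -> sat e q).
Proof. by split=> [[]//|pq]; case: (classic (sat e p)) => [/pq|]; [right|left]. Qed.

Definition horn (e : nat -> M) (hs : seq Defs.form) (c : Defs.form) : Prop :=
  foldr (fun h (P : Prop) => sat e h -> P) (sat e c) hs.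

Lemma sat_fimps (e : nat -> M) hs c :
  sat e (foldr (fun h q => fimp h q) c hs) <-> horn e hs c.
Proof. by elim: hs => //= h hs <-; exact: sat_fimp. Qed.

Definition env (l : seq M) : nat -> M := nth (p_zero M) l.

End Eval.

Lemma nmulZ k (x : Zstr) : nmul k x = (x *+ k)%R.
Proof. by elim: k => //= k IH; rewrite /nmul /= -/(nmul k x) IH mulrS. Qed.

Lemma cstZ c : cst Zstr c = (c%:R)%R.
Proof. exact: nmulZ. Qed.

Lemma zmulZ z (x : Zstr) : zmul z x = (x *~ z)%R.
Proof. by case: z => k /=; rewrite nmulZ // NegzE -mulrS mulrNz sub0r. Qed.

Lemma transfer (M : PStruct) : IsPresModel M -> forall hs c (l : seq M),
  (forall e : nat -> Zstr, horn e hs c) -> horn (env l) hs c.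
Proof.
by move=> HM hs c l hZ; apply/sat_fimps/HM => e; apply/sat_fimps.
Qed.

Section PresburgerArithmetic.
Variable M : PStruct.
Hypothesis HM : IsPresModel M.
Local Notation "x + y" := (@p_add M x y).
Local Notation "x - y" := (@p_sub M x y).
Local Notation "x < y" := (@p_lt M x y).
Local Notation "x <= y" := (@p_le M x y).
Local Notation "0" := (@p_zero M).

(* [transfer l hs c] proves the goal as the Horn clause [hs -> c], read in M with
   [V i] denoting [l`_i], and leaves its validity in Z (over an arbitrary [e]) to prove. *)
Tactic Notation "transfer" uconstr(l) uconstr(hs) constr(c) :=
  have := @transfer M HM (hs : seq Defs.form) c (l : seq M);
  rewrite /horn /sat /= ?teval_nmul ?teval_cst ?teval_zmul /=;
  apply=> e; rewrite ?teval_nmul ?teval_cst ?teval_zmul ?nmulZ ?cstZ ?zmulZ /=.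

Lemma p_lt_or_ge (x y : M) : x < y \/ y <= x.
Proof. by transfer [:: x; y] [::] (FOr (FLt (V 0) (V 1)) (fle (V 1) (V 0))); lia. Qed.

Lemma p_le_trans (x y z : M) : x <= y -> y <= z -> x <= z.
Proof. by transfer [:: x; y; z] [:: fle (V 0) (V 1); fle (V 1) (V 2)] (fle (V 0) (V 2)); lia. Qed.

Lemma nmul_inj k (x y : M) : (0 < k)%N -> nmul k x = nmul k y -> x = y.
Proof.
move=> k_gt0.
by transfer [:: x; y] [:: FEq (tnmul k (V 0)) (tnmul k (V 1))] (FEq (V 0) (V 1)); nia.
Qed.

Lemma nmul_mono k (x y : M) : x <= y -> nmul k x <= nmul k y.
Proof.
by transfer [:: x; y] [:: fle (V 0) (V 1)] (fle (tnmul k (V 0)) (tnmul k (V 1))); nia.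
Qed.

Lemma nmulD p q (x : M) : nmul (p + q) x = nmul p x + nmul q x.
Proof.
by transfer [:: x] [::] (FEq (tnmul (p + q) (V 0)) (TAdd (tnmul p (V 0)) (tnmul q (V 0)))); nia.
Qed.

Lemma lt_sub_of_add_lt (v w z : M) : v + z < w -> z < w - v.
Proof.
by transfer [:: v; w; z] [:: FLt (TAdd (V 0) (V 2)) (V 1)] (FLt (V 2) (TSub (V 1) (V 0))); lia.
Qed.

Lemma eq_sub_of_add_eq (v w z : M) : v = w + z -> w = v - z.
Proof.
by transfer [:: v; w; z] [:: FEq (V 0) (TAdd (V 1) (V 2))] (FEq (V 1) (TSub (V 0) (V 2))); lia.
Qed.

Lemma le_add_cst0 (v w : M) : v <= w -> w <= v + cst M 0 -> w = v + cst M 0.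
Proof.
by transfer [:: v; w] [:: fle (V 0) (V 1); fle (V 1) (TAdd (V 0) (tcst 0))]
  (FEq (V 1) (TAdd (V 0) (tcst 0))); lia.
Qed.

Lemma le_add_cstS m (v w : M) :
  w <= v + cst M m.+1 -> w = v + cst M m.+1 \/ w <= v + cst M m.
Proof.
by transfer [:: v; w] [:: fle (V 1) (TAdd (V 0) (tcst m.+1))]
  (FOr (FEq (V 1) (TAdd (V 0) (tcst m.+1))) (fle (V 1) (TAdd (V 0) (tcst m)))); lia.
Qed.

Lemma quot_of_cong k c (x : M) : p_cong k x (cst M c) -> exists y, nmul k y = x - cst M c.
Proof.
have hZ (e : nat -> Zstr) : horn e [:: FCong k (V 0) (tcst c)]
    (FEx 1 (FEq (tnmul k (V 1)) (TSub (V 0) (tcst c)))).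
  rewrite /horn /sat /= teval_cst cstZ => /dvdzP [q Eq]; exists q; split=> //.
  by rewrite teval_nmul teval_cst nmulZ cstZ /upd /=; lia.
move=> x_cong; have := @transfer _ HM _ _ [:: x] hZ.
rewrite /horn /sat /= teval_cst => /(_ x_cong) [y [_]].
by rewrite teval_nmul teval_cst /=; exists y.
Qed.

Lemma nmul_floor K (g : M) : (0 < K)%N -> exists q, nmul K q <= g /\ g < nmul K q + cst M K.
Proof.
move=> K_gt0.
have hZ (e : nat -> Zstr) : horn e [::]
    (FEx 1 (FAnd (fle (tnmul K (V 1)) (V 0)) (FLt (V 0) (TAdd (tnmul K (V 1)) (tcst K))))).
  exists (e 0%N %/ K)%Z; split=> //=; rewrite teval_nmul teval_cst nmulZ cstZ /upd /=.
  have := divz_eq (e 0%N) K; have := ltz_pmod (e 0%N) (K_gt0 : (0 < Posz K)%R).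
  by have := modz_ge0 (e 0%N) (lt0n_neq0 K_gt0 : Posz K != 0%R); lia.
have := @transfer _ HM _ _ [:: g] hZ.
by rewrite /horn /sat /= => -[q [_]]; rewrite teval_nmul teval_cst /=; exists q.
Qed.

Lemma floor_le_cst K m (g q : M) :
  g < nmul K q + cst M K -> q <= cst M m -> ~ cst M (K * m + K) < g.
Proof.
by transfer [:: g; q] [:: FLt (V 0) (TAdd (tnmul K (V 1)) (tcst K)); fle (V 1) (tcst m)]
  (FNot (FLt (tcst (K * m + K)) (V 0))); rewrite natrD natrM; nia.
Qed.

Definition near (a d x : M) : Prop := a - d <= x /\ x <= a + d.

Lemma near_refl (a d : M) : 0 < d -> near a d a.
Proof.
by transfer [:: a; d] [:: FLt TZero (V 1)] (fnear (V 0) (V 1) (V 0)); lia.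
Qed.

Lemma near_le (a d d' x : M) : d <= d' -> near a d x -> near a d' x.
Proof.
by transfer [:: a; d; d'; x] [:: fle (V 1) (V 2); fnear (V 0) (V 1) (V 3)]
  (fnear (V 0) (V 2) (V 3)); lia.
Qed.

Lemma near0 : near 0 0 0.
Proof. by transfer [::] [::] (fnear TZero TZero TZero); lia. Qed.

Lemma near_add (a b d1 d2 x y : M) :
  near a d1 x -> near b d2 y -> near (a + b) (d1 + d2) (x + y).
Proof.
by transfer [:: a; b; d1; d2; x; y] [:: fnear (V 0) (V 2) (V 4); fnear (V 1) (V 3) (V 5)]
  (fnear (TAdd (V 0) (V 1)) (TAdd (V 2) (V 3)) (TAdd (V 4) (V 5))); lia.
Qed.

Lemma near_addr (a d x g : M) : near a d x -> near (a + g) d (x + g).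
Proof.
by transfer [:: a; d; x; g] [:: fnear (V 0) (V 1) (V 2)]
  (fnear (TAdd (V 0) (V 3)) (V 1) (TAdd (V 2) (V 3))); lia.
Qed.

Lemma near_zmul s (a d x : M) : near a d x -> near (zmul s a) (nmul `|s|%N d) (zmul s x).
Proof.
by transfer [:: a; d; x] [:: fnear (V 0) (V 1) (V 2)]
  (fnear (tzmul s (V 0)) (tnmul `|s|%N (V 1)) (tzmul s (V 2))); case: s => k /=; nia.
Qed.

Lemma near_quot k c (a d x ya y : M) : (0 < k)%N ->
  nmul k ya = a - cst M c -> nmul k y = x - cst M c -> near a d x -> near ya d y.
Proof.
move=> k_gt0.
by transfer [:: a; d; x; ya; y] [:: FEq (tnmul k (V 3)) (TSub (V 0) (tcst c));
  FEq (tnmul k (V 4)) (TSub (V 2) (tcst c)); fnear (V 0) (V 1) (V 2)]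
  (fnear (V 3) (V 1) (V 4)); nia.
Qed.

Lemma le_of_near_below (v p w t d x : M) :
  near v p w -> d + p <= t - v -> near t d x -> w <= x.
Proof.
by transfer [:: v; p; w; t; d; x] [:: fnear (V 0) (V 1) (V 2);
  fle (TAdd (V 4) (V 1)) (TSub (V 3) (V 0)); fnear (V 3) (V 4) (V 5)] (fle (V 2) (V 5)); lia.
Qed.

Lemma le_of_near_above (v p w t d x : M) :
  near v p w -> d + p <= v - t -> near t d x -> x <= w.
Proof.
by transfer [:: v; p; w; t; d; x] [:: fnear (V 0) (V 1) (V 2);
  fle (TAdd (V 4) (V 1)) (TSub (V 0) (V 3)); fnear (V 3) (V 4) (V 5)] (fle (V 5) (V 2)); lia.
Qed.

Lemma sub_cst_neq i j (a : M) : (i < j)%N -> a - cst M i <> a - cst M j.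
Proof.
move=> lt_ij.
by transfer [:: a] [::] (FNot (FEq (TSub (V 0) (tcst i)) (TSub (V 0) (tcst j)))); lia.
Qed.

Lemma add_cst_neq i j (a : M) : (i < j)%N -> a + cst M i <> a + cst M j.
Proof.
move=> lt_ij.
by transfer [:: a] [::] (FNot (FEq (TAdd (V 0) (tcst i)) (TAdd (V 0) (tcst j)))); lia.
Qed.

Lemma sub_cst_between j (a d : M) : cst M j < d -> a - d <= a - cst M j /\ a - cst M j <= a.
Proof.
by transfer [:: a; d] [:: FLt (tcst j) (V 1)]
  (FAnd (fle (TSub (V 0) (V 1)) (TSub (V 0) (tcst j))) (fle (TSub (V 0) (tcst j)) (V 0))); lia.
Qed.

Lemma add_cst_between j (a d : M) : cst M j < d -> a <= a + cst M j /\ a + cst M j <= a + d.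
Proof.
by transfer [:: a; d] [:: FLt (tcst j) (V 1)]
  (FAnd (fle (V 0) (TAdd (V 0) (tcst j))) (fle (TAdd (V 0) (tcst j)) (TAdd (V 0) (V 1)))); lia.
Qed.

End PresburgerArithmetic.

Section Nonstandard.
Variable M : PStruct.
Hypothesis HM : IsPresModel M.
Local Notation "x + y" := (@p_add M x y).
Local Notation "x - y" := (@p_sub M x y).
Local Notation "x < y" := (@p_lt M x y).
Local Notation "x <= y" := (@p_le M x y).

Definition nonstd (d : M) : Prop := forall m, cst M m < d.

Lemma le_add_cst_eq m (v w : M) : v <= w -> w <= v + cst M m -> exists j, w = v + cst M j.
Proof.
elim: m w => [|m IHm] w le_vw le_w.
  by exists 0%N; apply: le_add_cst0.
by case: (le_add_cstS HM le_w) => [->|]; [exists m.+1 | exact: IHm].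
Qed.

Lemma nonstd_floor K (g : M) : (0 < K)%N -> nonstd g ->
  exists q, nonstd q /\ forall d, d <= q -> nmul K d <= g.
Proof.
move=> K_gt0 g_nonstd; have [q [le_g lt_g]] := nmul_floor HM g K_gt0.
exists q; split; last by move=> d le_dq; exact: p_le_trans (nmul_mono HM K le_dq) le_g.
move=> m; case: (p_lt_or_ge HM (cst M m) q) => // le_q.
by case: (floor_le_cst HM lt_g le_q (g_nonstd _)).
Qed.

Lemma nonstd_min (d1 d2 : M) : nonstd d1 -> nonstd d2 -> exists d, [/\ nonstd d, d <= d1 & d <= d2].
Proof.
move=> ns1 ns2; case: (p_lt_or_ge HM d1 d2) => lt12.
  by exists d1; split=> //; [right|left].
by exists d2; split=> //; right.
Qed.

Lemma infinite_below (a d : M) : nonstd d -> infinite_set (fun x => a - d <= x /\ x <= a).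
Proof.
move=> d_nonstd m /(_ (fun j : 'I_m.+1 => a - cst M j)); apply; last first.
  by move=> j; apply: sub_cst_between.
move=> i j eq_ij; apply/val_inj; case: (ltngtP i j) => // lt_ij; exfalso.
  exact: (sub_cst_neq HM lt_ij) eq_ij.
exact: (sub_cst_neq HM lt_ij) (esym eq_ij).
Qed.

Lemma infinite_above (a d : M) : nonstd d -> infinite_set (fun x => a <= x /\ x <= a + d).
Proof.
move=> d_nonstd m /(_ (fun j : 'I_m.+1 => a + cst M j)); apply; last first.
  by move=> j; apply: add_cst_between.
move=> i j eq_ij; apply/val_inj; case: (ltngtP i j) => // lt_ij; exfalso.
  exact: (add_cst_neq HM lt_ij) eq_ij.
exact: (add_cst_neq HM lt_ij) (esym eq_ij).
Qed.

End Nonstandard.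

Fixpoint tren (s : nat -> nat) (t : term) : term :=
  match t with
  | TVar i => TVar (s i)
  | TZero => TZero
  | TOne => TOne
  | TAdd t1 t2 => TAdd (tren s t1) (tren s t2)
  | TSub t1 t2 => TSub (tren s t1) (tren s t2)
  end.

Fixpoint fren (s : nat -> nat) (f : Defs.form) : Defs.form :=
  match f with
  | FLt t1 t2 => FLt (tren s t1) (tren s t2)
  | FEq t1 t2 => FEq (tren s t1) (tren s t2)
  | FCong n t1 t2 => FCong n (tren s t1) (tren s t2)
  | FNot g => FNot (fren s g)
  | FAnd g h => FAnd (fren s g) (fren s h)
  | FOr g h => FOr (fren s g) (fren s h)
  | FEx i g => FEx (s i) (fren s g)
  end.

Section Renaming.
Variable M : PStruct.

Lemma teval_ren s (e : nat -> M) t : teval e (tren s t) = teval (e \o s) t.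
Proof. by elim: t => //= t1 -> t2 ->. Qed.

Lemma upd_comp s (e : nat -> M) i x : injective s -> upd e (s i) x \o s = upd (e \o s) i x.
Proof.
move=> s_inj; apply: functional_extensionality => j; rewrite /upd /=.
by rewrite (inj_eq s_inj).
Qed.

Lemma sat_ren s (D : M -> Prop) f (e : nat -> M) :
  injective s -> satIn D e (fren s f) <-> satIn D (e \o s) f.
Proof.
move=> s_inj; elim: f e => /=.
- by move=> t1 t2 e; rewrite !teval_ren.
- by move=> t1 t2 e; rewrite !teval_ren.
- by move=> n t1 t2 e; rewrite !teval_ren.
- by move=> g IHg e; rewrite IHg.
- by move=> g IHg h IHh e; rewrite IHg IHh.
- by move=> g IHg h IHh e; rewrite IHg IHh.
move=> i g IHg e.
by split=> -[x [Dx sat_g]]; exists x; move: sat_g; rewrite IHg upd_comp.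
Qed.

End Renaming.

Section DefinableClosure.
Variable M : PStruct.
Variable A : M -> Prop.
Local Notation "x + y" := (@p_add M x y).
Local Notation "x - y" := (@p_sub M x y).
Local Notation "x <= y" := (@p_le M x y).

Lemma dcl_in x : A x -> dcl A x.
Proof. by move=> Ax; exists (FEq (V 0) (V 1)), (fun _ => x); split. Qed.

Lemma dcl_mono (B : M -> Prop) x : (forall y, A y -> B y) -> dcl A x -> dcl B x.
Proof. by move=> AB [f [e [Ae def_x]]]; exists f, e; split=> // i /Ae /AB. Qed.

Lemma dcl_comp2 x1 x2 z (chi : Defs.form) : dcl A x1 -> dcl A x2 ->
  (forall e : nat -> M, e 1%N = x1 -> e 2%N = x2 -> (sat e chi <-> e 0%N = z)) ->
  dcl A z.
Proof.
move=> [f1 [e1 [Ae1 def1]]] [f2 [e2 [Ae2 def2]]] def_z.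
(* The parameters of the two definitions are moved to the disjoint positions 3j+1 and
   3j+2, which leaves the variables 0, 1, 2 for z, x1, x2. *)
pose s1 v := (3 * v + 1)%N; pose s2 v := (3 * v + 2)%N.
have s1_inj : injective s1 by move=> ? ?; rewrite /s1; lia.
have s2_inj : injective s2 by move=> ? ?; rewrite /s2; lia.
pose E v := if (v < 3)%N then e1 1%N else if (v %% 3 == 1)%N then e1 (v %/ 3) else e2 (v %/ 3).
pose E' y u1 u2 := upd (upd (upd E 0 y) 1 u1) 2 u2.
have E's1 y u1 u2 : E' y u1 u2 \o s1 = upd e1 0 u1.
  apply: functional_extensionality => -[|j] //; rewrite /E' /upd /E /s1 /=.
  by do 3 (case: ifP => ?; first lia); case: ifP => ?; [congr e1 | ]; lia.
have E's2 y u1 u2 : E' y u1 u2 \o s2 = upd e2 0 u2.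
  apply: functional_extensionality => -[|j] //; rewrite /E' /upd /E /s2 /=.
  by do 4 (case: ifP => ?; first lia); congr e2; lia.
exists (FEx 1 (FEx 2 (FAnd (fren s1 f1) (FAnd (fren s2 f2) chi)))), E; split.
  move=> i i_neq0; rewrite /E; case: ifP => [_|i_ge3]; first exact: Ae1.
  by case: ifP => _; [apply: Ae1 | apply: Ae2]; lia.
move=> y; rewrite /sat /=; split.
  case=> u1 [_ [u2 [_ [sat1 [sat2 sat_chi]]]]].
  move: sat1 sat2; rewrite !sat_ren // E's1 E's2 => /def1 eq1 /def2 eq2.
  by have [chi_z _] := def_z (E' y u1 u2) eq1 eq2; apply: chi_z.
move=> ->; exists x1; split=> //; exists x2; split=> //.
rewrite !sat_ren // E's1 E's2; split; first exact/def1.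
by split; [exact/def2 | apply/def_z].
Qed.

Lemma dcl_add x y : dcl A x -> dcl A y -> dcl A (x + y).
Proof.
move=> dx dy; apply: (dcl_comp2 (chi := FEq (V 0) (TAdd (V 1) (V 2))) dx dy).
by move=> e e1 e2; rewrite /sat /= e1 e2.
Qed.

Lemma dcl_add_cst j x : dcl A x -> dcl A (x + cst M j).
Proof.
move=> dx; apply: (dcl_comp2 (chi := FEq (V 0) (TAdd (V 1) (tcst j))) dx dx).
by move=> e e1 _; rewrite /sat /= teval_cst e1.
Qed.

Lemma dcl_sub_cst j x : dcl A x -> dcl A (x - cst M j).
Proof.
move=> dx; apply: (dcl_comp2 (chi := FEq (V 0) (TSub (V 1) (tcst j))) dx dx).
by move=> e e1 _; rewrite /sat /= teval_cst e1.
Qed.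

Lemma dcl_zmul s x : dcl A x -> dcl A (zmul s x).
Proof.
move=> dx; apply: (dcl_comp2 (chi := FEq (V 0) (tzmul s (V 1))) dx dx).
by move=> e e1 _; rewrite /sat /= teval_zmul /= e1.
Qed.

Lemma dcl_big n (F : 'I_n -> M) : A (p_zero M) -> (forall i, dcl A (F i)) ->
  dcl A (\big[@p_add M / p_zero M]_(i < n) F i).
Proof.
move=> A0; elim: n F => [|n IHn] F dF; first by rewrite big_ord0; exact: dcl_in.
by rewrite big_ord_recl; apply: dcl_add => //; exact: IHn.
Qed.

Hypothesis HM : IsPresModel M.

Lemma dcl_quot k c x y : (0 < k)%N -> nmul k y = x - cst M c -> dcl A x -> dcl A y.
Proof.
move=> k_gt0 def_y dx.
apply: (dcl_comp2 (chi := FEq (tnmul k (V 0)) (TSub (V 1) (tcst c))) dx dx).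
move=> e e1 _; rewrite /sat /= teval_nmul teval_cst e1 /= -def_y.
by split=> [/(nmul_inj HM k_gt0)|->].
Qed.

Lemma nonstd_above_dcl v w : dcl A v -> ~ dcl A w -> v <= w -> nonstd (w - v).
Proof.
move=> dv ndw le_vw m; apply: (lt_sub_of_add_lt HM).
case: (p_lt_or_ge HM (v + cst M m) w) => // le_w; exfalso.
by have [j def_w] := le_add_cst_eq HM le_vw le_w; apply: ndw; rewrite def_w; apply: dcl_add_cst.
Qed.

Lemma nonstd_below_dcl v w : dcl A v -> ~ dcl A w -> w <= v -> nonstd (v - w).
Proof.
move=> dv ndw le_wv m; apply: (lt_sub_of_add_lt HM).
case: (p_lt_or_ge HM (w + cst M m) v) => // le_v; exfalso.
have [j /(eq_sub_of_add_eq HM) def_w] := le_add_cst_eq HM le_wv le_v.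
by apply: ndw; rewrite def_w; apply: dcl_sub_cst.
Qed.

Lemma nonstd_room_above K v w : dcl A v -> ~ dcl A w -> v <= w ->
  exists q, nonstd q /\ forall d, d <= q -> nmul K.+1 d <= w - v.
Proof. by move=> dv ndw le_vw; apply: (nonstd_floor HM (ltn0Sn K)); exact: nonstd_above_dcl. Qed.

Lemma nonstd_room_below K v w : dcl A v -> ~ dcl A w -> w <= v ->
  exists q, nonstd q /\ forall d, d <= q -> nmul K.+1 d <= v - w.
Proof. by move=> dv ndw le_wv; apply: (nonstd_floor HM (ltn0Sn K)); exact: nonstd_below_dcl. Qed.

End DefinableClosure.

Section LinearFunctions.
Variable M : PStruct.
Hypothesis HM : IsPresModel M.
Local Notation "x + y" := (@p_add M x y).
Local Notation "x - y" := (@p_sub M x y).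

Definition lf_norm n (f : Defs.linfun M n) : nat := \sum_(i < n) `|lf_s f i|%N.

Lemma near_sum n (s : 'I_n -> int) (a x : 'I_n -> M) d :
  (forall i, near (a i) d (x i)) ->
  near (\big[@p_add M / p_zero M]_(i < n) zmul (s i) (a i)) (nmul (\sum_(i < n) `|s i|%N) d)
       (\big[@p_add M / p_zero M]_(i < n) zmul (s i) (x i)).
Proof.
elim: n s a x => [|n IHn] s a x near_ax; first by rewrite !big_ord0; exact: near0.
rewrite !big_ord_recl (nmulD HM); apply: (near_add HM); first exact: near_zmul.
exact: IHn.
Qed.

Lemma linval_near n B (C : ('I_n -> M) -> Prop) (f : Defs.linfun M n) (a x : 'I_n -> M) v d :
  is_Blin B C f -> C x -> linval f a v -> (forall i, near (a i) d (x i)) ->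
  exists w, linval f x w /\ near v (nmul (lf_norm f) d) w.
Proof.
case=> k_gt0 _ _ x_cong Cx [ya [def_ya ->]] near_ax.
have /fin_all_exists [y def_y] :
    forall i, exists y : M, nmul (lf_k f i) y = x i - cst M (lf_c f i).
  by move=> i; exact: (quot_of_cong HM (x_cong _ Cx i)).
exists (\big[@p_add M / p_zero M]_(i < n) zmul (lf_s f i) (y i) + lf_g f).
split; first by exists y.
apply: (near_addr HM); apply: near_sum => i.
exact: (near_quot HM (k_gt0 i) (def_ya i) (def_y i) (near_ax i)).
Qed.

Lemma linval_dcl n B (A : M -> Prop) (C : ('I_n -> M) -> Prop) (f : Defs.linfun M n) a v :
  is_Blin B C f -> (forall y, B y -> A y) -> A (p_zero M) -> (forall i, A (a i)) ->
  linval f a v -> dcl A v.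
Proof.
case=> k_gt0 _ dg _ BA A0 Aa [ya [def_ya ->]].
apply: dcl_add; last exact: dcl_mono dg.
apply: dcl_big => // i; apply: dcl_zmul.
by apply: (dcl_quot HM (k_gt0 i) (def_ya i)); exact: dcl_in.
Qed.

End LinearFunctions.

Section Cells.
Variable M : PStruct.
Hypothesis HM : IsPresModel M.
Variable M0 : M -> Prop.
Hypothesis M0_0 : M0 (p_zero M).
Local Notation "x + y" := (@p_add M x y).
Local Notation "x - y" := (@p_sub M x y).
Local Notation "x <= y" := (@p_le M x y).

Definition params_but n (a : 'I_n -> M) (i : 'I_n) (x : M) : Prop :=
  M0 x \/ exists j, j != i /\ x = a j.

Definition generic n (a : 'I_n -> M) : Prop := forall i, ~ dcl (params_but a i) (a i).

Lemma generic_of_dim_full n (a : 'I_n -> M) : dim_eq M0 a n -> generic a.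
Proof.
case=> S [indS _ cardS]; have ST : S = setT.
  by apply/eqP; rewrite eqEcard subsetT cardsT card_ord cardS leqnn.
move=> i dcl_i; apply: (indS i); first by rewrite ST in_setT.
apply: dcl_mono dcl_i.
by move=> x [M0x | [j [ne_ji ->]]]; [left | right; exists j; rewrite ST in_setT].
Qed.

Lemma generic_init n (a : 'I_n.+1 -> M) : generic a -> generic (tinit a).
Proof.
move=> ga i dcl_i; apply: (ga (widen_ord (leqnSn n) i)); apply: dcl_mono dcl_i.
by move=> x [M0x | [j [ne_ji ->]]]; [left | right; exists (widen_ord (leqnSn n) j)].
Qed.

Lemma nonstd_of_generic n (a : 'I_n -> M) (i : 'I_n) : generic a -> exists D : M, nonstd D.
Proof.
move=> /(_ i) ndcl; have d0 : dcl (params_but a i) (p_zero M) by apply: dcl_in; left.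
case: (p_lt_or_ge HM (p_zero M) (a i)) => [lt0 | le0].
  by exists (a i - p_zero M); apply: (nonstd_above_dcl HM d0 ndcl); left.
by exists (p_zero M - a i); apply: (nonstd_below_dcl HM d0 ndcl le0).
Qed.

Definition cong_nbhd n (a : 'I_n -> M) (d : M) (N c : nat -> nat) (x : 'I_n -> M) : Prop :=
  forall i : 'I_n, near (a i) d (x i) /\ p_cong (N i) (x i) (cst M (c i)).

Definition cong_data n (a : 'I_n -> M) (N c : nat -> nat) : Prop :=
  forall i : 'I_n, [/\ (0 < N i)%N, (c i < N i)%N & p_cong (N i) (a i) (cst M (c i))].

Definition inner_box n (C : ('I_n -> M) -> Prop) (a : 'I_n -> M) : Prop :=
  exists d (N c : nat -> nat),
    [/\ nonstd d, cong_data a N c & forall x, cong_nbhd a d N c x -> C x].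

Definition nat_snoc n (f : nat -> nat) (v : nat) : nat -> nat :=
  fun j => if (j < n)%N then f j else v.

Lemma cong_nbhd_le n (a x : 'I_n -> M) d d' N c :
  d <= d' -> cong_nbhd a d N c x -> cong_nbhd a d' N c x.
Proof.
by move=> le_dd' nbhd i; have [near_i cong_i] := nbhd i; split=> //; exact: (near_le HM le_dd').
Qed.

Lemma widen_ord_neq_max n (i : 'I_n) : widen_ord (leqnSn n) i != ord_max.
Proof. by rewrite -(inj_eq val_inj) /= neq_ltn ltn_ord. Qed.

Lemma cong_nbhd_snoc n (a x : 'I_n.+1 -> M) d N' c' N k :
  cong_nbhd a d (nat_snoc n N' N) (nat_snoc n c' k) x ->
  [/\ cong_nbhd (tinit a) d N' c' (tinit x), near (tlast a) d (tlast x)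
    & p_cong N (tlast x) (cst M k)].
Proof.
move=> nbhd; have [near_last] := nbhd ord_max; rewrite /nat_snoc /= ltnn => cong_last.
by split=> // i; have := nbhd (widen_ord (leqnSn n) i); rewrite /nat_snoc /= ltn_ord.
Qed.

Lemma cong_data_snoc n (a : 'I_n.+1 -> M) N' c' N k :
  cong_data (tinit a) N' c' -> (0 < N)%N -> (k < N)%N -> p_cong N (tlast a) (cst M k) ->
  cong_data a (nat_snoc n N' N) (nat_snoc n c' k).
Proof.
move=> data N_gt0 k_lt_N cong_last i; rewrite /nat_snoc.
case: (ltnP i n) => [lt_in | le_ni]; last first.
  have -> : i = ord_max by apply: val_inj => /=; have := ltn_ord i; lia.
  by split.
have -> : i = widen_ord (leqnSn n) (Ordinal lt_in) by exact: val_inj.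
exact: data.
Qed.

Lemma inner_box_nil (D : M) (a : 'I_0 -> M) : nonstd D -> inner_box (fun _ => True) a.
Proof. by move=> nD; exists D, (fun _ => 1%N), (fun _ => 0%N); split=> // -[]. Qed.

Lemma inner_box_strip n (C : ('I_n -> M) -> Prop) (al be : Defs.linfun M n) lo hi N k
    (a : 'I_n.+1 -> M) :
  is_Blin M0 C al -> is_Blin M0 C be -> (0 < N)%N -> (k < N)%N ->
  generic a -> inner_box C (tinit a) -> strip al be lo hi N k (tinit a) (tlast a) ->
  inner_box (fun z => C (tinit z) /\ strip al be lo hi N k (tinit z) (tlast z)) a.
Proof.
move=> bal bbe N_gt0 k_lt_N ga [d' [N' [c' [nd' data' box']]]] [lo_a hi_a cong_a].
have last_ndcl : ~ dcl (params_but a ord_max) (tlast a) := ga ord_max.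
have dcl_bound f v : is_Blin M0 C f -> linval f (tinit a) v -> dcl (params_but a ord_max) v.
  move=> bf; apply: (linval_dcl HM bf) => [y|| i]; [by left | by left | right].
  by exists (widen_ord (leqnSn n) i); rewrite widen_ord_neq_max.
have [ql [nql room_lo]] : exists q, nonstd q /\ forall d, d <= q -> lo ->
    exists v, linval al (tinit a) v /\ nmul (lf_norm al).+1 d <= tlast a - v.
  case: lo lo_a => [/(_ isT) [v [lv le_v]] | _]; last by exists d'.
  have [q [nq room]] := nonstd_room_above HM (lf_norm al) (dcl_bound _ _ bal lv) last_ndcl le_v.
  by exists q; split=> // d le_dq _; exists v; split=> //; exact: room.
have [qh [nqh room_hi]] : exists q, nonstd q /\ forall d, d <= q -> hi ->
    exists v, linval be (tinit a) v /\ nmul (lf_norm be).+1 d <= v - tlast a.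
  case: hi hi_a => [/(_ isT) [v [lv le_v]] | _]; last by exists d'.
  have [q [nq room]] := nonstd_room_below HM (lf_norm be) (dcl_bound _ _ bbe lv) last_ndcl le_v.
  by exists q; split=> // d le_dq _; exists v; split=> //; exact: room.
have [d1 [nd1 le_d1' le_d1l]] := nonstd_min HM nd' nql.
have [d [nd le_dd1 le_dh]] := nonstd_min HM nd1 nqh.
exists d, (nat_snoc n N' N), (nat_snoc n c' k); split=> //.
  exact: cong_data_snoc.
move=> x /cong_nbhd_snoc [nbhd_init near_last cong_last].
have Cx := box' _ (cong_nbhd_le (p_le_trans HM le_dd1 le_d1') nbhd_init).
have near_init i : near (tinit a i) d (tinit x i) := (nbhd_init i).1.
split=> //; split=> // [/(room_lo d (p_le_trans HM le_dd1 le_d1l)) | /(room_hi d le_dh)].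
  case=> v [lv room]; have [w [lw near_w]] := linval_near HM bal Cx lv near_init.
  by exists w; split=> //; exact: (le_of_near_below HM near_w room near_last).
case=> v [lv room]; have [w [lw near_w]] := linval_near HM bbe Cx lv near_init.
by exists w; split=> //; exact: (le_of_near_above HM near_w room near_last).
Qed.

Lemma open_cell_inner_box (D : M) s n (C : ('I_n -> M) -> Prop) :
  nonstd D -> cell M0 s C -> all id s -> forall a, C a -> generic a -> inner_box C a.
Proof.
move=> nD; elim=> {n s C} [|n s C f _ _ _|n s C al be lo hi N k _ IH bal bbe N_gt0 k_lt_N _].
- by move=> _ a _ _; exact: inner_box_nil nD.
- by rewrite all_rcons.
rewrite all_rcons => /andP [_ all_s] a [Ca strip_a] ga.
exact: inner_box_strip (IH all_s _ Ca (generic_init ga)) strip_a.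
Qed.

Lemma box_around_cong_nbhd n (a : 'I_n -> M) d N c :
  nonstd d -> cong_data a N c -> box_around a (cong_nbhd a d N c).
Proof.
move=> nd data; exists (fun i => a i - d), (fun i => a i + d), (fun _ => true), (fun _ => true).
exists (fun i => N i), (fun i => c i); split.
- by move=> i; have [] := data i.
- by move=> i; have [_ _ cong_i] := data i; have [] := near_refl HM (a i) (nd 0%N).
- by move=> i _; exact: infinite_below.
- by move=> i _; exact: infinite_above.
move=> x; split=> nbhd i.
  by have [[lo_i hi_i] cong_i] := nbhd i; split.
by have [lo_i hi_i cong_i] := nbhd i; do !split=> //; [apply: lo_i | apply: hi_i].
Qed.

Lemma box_around_nil (a : 'I_0 -> M) : box_around a (fun _ => True).
Proof.
exists a, a, (fun _ => false), (fun _ => false), (fun _ => 1%N), (fun _ => 0%N).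
split; try by case.
by move=> x; split=> // _; case.
Qed.

End Cells.

Theorem lemma3p4 (M : PStruct) (M0 : M -> Prop) (n : nat)
    (C : ('I_n -> M) -> Prop) (a : 'I_n -> M) :
  IsPresModel M -> Saturated M ->
  elem_sub M0 -> small M0 ->
  open_cell M0 C -> C a -> dim_eq M0 a n ->
  exists Bx : ('I_n -> M) -> Prop, box_around a Bx /\ (forall x, Bx x -> C x).
Proof.
move=> HM _ [[M0_0 _ _ _] _] _ oC Ca /generic_of_dim_full.
case: n C a oC Ca => [|n] C a oC Ca ga.
  exists (fun _ => True); split; first exact: box_around_nil.
  by move=> x _; rewrite (_ : x = a) //; apply: functional_extensionality => -[].
have [D nD] := nonstd_of_generic HM M0_0 ord0 ga.
have [d [N [c [nd data sub]]]] := open_cell_inner_box HM M0_0 nD oC (all_nseq _ _ _) Ca ga.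
by exists (cong_nbhd a d N c); split; first exact: box_around_cong_nbhd.
Qed.
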